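(* Let $\mathbb{K}$ be a field and let $\mathcal F=\{f_n(q)\}_{n=1}^\infty$ be a sequence of polynomials in $\mathbb{K}[q]$ satisfying $f_{mn}(q)=f_m(q)f_n(q^m)$ for all $m,n\in\mathbb N$. Suppose $\mathrm{supp}(\mathcal F)=S(P)$ for some nonempty finite set $P$ of prime numbers, and $f_p(0)=1$ for all $p\in P$. Then there exists a formal power series $F(q)\in\mathbb{K}[[q]]$ such that \[ F(q)=\lim_{\substack{n\to\infty\\ n\in S(P)}}f_n(q), \] i.e. for every $N$ there is $n_0$ such that $f_n(q)\equiv F(q)\pmod{q^N}$ for all $n\in S(P)$ with $n\ge n_0$.
   Context: $\mathbb N=\{1,2,3,\dots\}$. $\mathrm{supp}(\mathcal F)=\{n\in\mathbb N: f_n(q)\ne0\}$. For a set $P$ of primes, $S(P)$ is the multiplicative semigroup of positive integers generated by $P$ (all finite products of elements of $P$, including the empty product $1$). For power series $g,h$, $g\equiv h\pmod{q^N}$ means their coefficients of $q^0,\dots,q^{N-1}$ agree. *)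

From mathcomp Require Import all_boot all_order all_algebra.
Set Implicit Arguments. Unset Strict Implicit. Unset Printing Implicit Defensive.
Import GRing.Theory.
Local Open Scope ring_scope.

(* S(P): the multiplicative semigroup generated by the primes in P
   (finite products of elements of P, including the empty product 1). *)
Definition inS (P : seq nat) (n : nat) : Prop :=
  exists s : seq nat, all (fun p => p \in P) s /\ n = (\prod_(p <- s) p)%N.

Definition fps (K : fieldType) := nat -> K.

Definition congr_mod_qN (K : fieldType) (g : {poly K}) (F : fps K) (N : nat) : Prop :=
  forall i, (i < N)%N -> g`_i = F i.

(** The relation [f (k * m) = f k * f m (q ^ k)] shows that once [f m] has
    constant term [1], multiplying the index by [m] leaves the coefficients
    of [f k] below [q ^ k] untouched.  Constant terms are multiplicative, so
    every [f n] with [n] in [S(P)] has constant term [1].  Hence for [m, k]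
    in [S(P)] that are both at least [M], [f m] and [f k] agree modulo [q ^ M]
    with [f (k * m)]; the limit is read off the powers of any prime of [P]. *)
From mathcomp Require Import all_boot all_order all_algebra.
Import GRing.Theory.
Local Open Scope ring_scope.

Lemma coefM_comp_Xn_small (R : nzSemiRingType) (p q : {poly R}) k i :
  (i < k)%N -> (p * (q \Po 'X^k))`_i = p`_i * q`_0.
Proof.
move=> lt_ik; have k_gt0 : (0 < k)%N by apply: leq_ltn_trans lt_ik.
rewrite coefMr big_ord_recl subn0 coef_comp_poly_Xn // dvdn0 div0n.
rewrite big1 ?addr0 // => j _; rewrite coef_comp_poly_Xn //.
have k_ndvd_j : ~~ (k %| bump 0 j)%N.
  apply: contraTN lt_ik => /(dvdn_leq (ltn0Sn j)) le_kj.
  by rewrite -leqNgt (leq_trans le_kj) // -ltnS /bump /= add1n ltn_ord.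
by rewrite (negbTE k_ndvd_j) mulr0.
Qed.

Lemma inS1 (P : seq nat) : inS P 1.
Proof. by exists [::]; rewrite big_nil. Qed.

Lemma inS_gt0 {P : seq nat} {n : nat} : all prime P -> inS P n -> (0 < n)%N.
Proof.
move=> prP [s [sP ->]]; rewrite big_seq prodn_cond_gt0 // => p /(allP sP) Pp.
by rewrite prime_gt0 // (allP prP).
Qed.

Lemma inS_expn (P : seq nat) p k : p \in P -> inS P (p ^ k).
Proof.
move=> Pp; exists (nseq k p); split; first by rewrite all_nseq Pp orbT.
by rewrite big_nseq; elim: k => //= k <-; rewrite expnS.
Qed.

Section MultiplicativePolynomialSequence.

Variables (K : fieldType) (f : nat -> {poly K}).
Hypothesis f_mul :
  forall m n, (0 < m)%N -> (0 < n)%N -> f (m * n)%N = f m * (f n \Po 'X^m).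

Lemma coef_f_mul_small m n i : (0 < n)%N -> (i < m)%N ->
  (f (m * n)%N)`_i = (f m)`_i * (f n)`_0.
Proof.
move=> n_gt0 lt_im; rewrite f_mul ?coefM_comp_Xn_small //.
exact: leq_ltn_trans lt_im.
Qed.

Lemma f1_eq1 : f 1%N != 0 -> f 1%N = 1.
Proof.
move=> f1_neq0; apply: (mulfI f1_neq0).
by have := f_mul 1 1 isT isT; rewrite muln1 comp_polyXr mulr1 => <-.
Qed.

Variable P : seq nat.
Hypotheses (prP : all prime P) (f1_neq0 : f 1%N != 0).
Hypothesis f_prime_coef0 : forall p, p \in P -> (f p).[0] = 1.

Lemma f_coef0_inS {n : nat} : inS P n -> (f n)`_0 = 1.
Proof.
move=> [s [sP ->]]; elim: s sP => [|p s IHs] /=.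
  by rewrite big_nil f1_eq1 // coefC.
case/andP=> Pp sP; have p_gt0 := prime_gt0 (allP prP p Pp).
have s_gt0 : (0 < \prod_(j <- s) j)%N by apply: (inS_gt0 prP); exists s.
by rewrite big_cons coef_f_mul_small // IHs // -horner_coef0 f_prime_coef0 ?mulr1.
Qed.

Lemma f_coef_stable M m k i : inS P m -> inS P k ->
  (M <= m)%N -> (M <= k)%N -> (i < M)%N -> (f m)`_i = (f k)`_i.
Proof.
move=> Pm Pk le_Mm le_Mk lt_iM.
have m_gt0 := inS_gt0 prP Pm; have k_gt0 := inS_gt0 prP Pk.
rewrite -[RHS]mulr1 -(f_coef0_inS Pm) -coef_f_mul_small //; last first.
  exact: leq_trans le_Mk.
by rewrite mulnC coef_f_mul_small ?f_coef0_inS ?mulr1 // (leq_trans lt_iM).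
Qed.

End MultiplicativePolynomialSequence.

Theorem mainTheorem4 (K : fieldType) (f : nat -> {poly K}) (P : seq nat) :
  (forall m n, (0 < m)%N -> (0 < n)%N -> f (m * n)%N = f m * (f n \Po 'X^m)) ->
  (forall n, (0 < n)%N -> (f n != 0 <-> inS P n)) ->
  P != [::] -> all prime P ->
  (forall p, p \in P -> (f p).[0] = 1) ->
  exists F : fps K, forall N : nat, exists n0 : nat,
    forall n, (0 < n)%N -> inS P n -> (n0 <= n)%N -> congr_mod_qN (f n) F N.
Proof.
move=> f_mul f_supp; case: P f_supp => [//|p P'] f_supp _ prP f_prime_coef0.
have Pp : p \in p :: P' by rewrite mem_head.
have f1_neq0 : f 1%N != 0 by apply/f_supp => //; apply: inS1.
exists (fun i => (f (p ^ i.+1)%N)`_i) => N; exists N => n _ Pn le_Nn i lt_iN.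
apply: (@f_coef_stable _ _ f_mul _ prP f1_neq0 f_prime_coef0 i.+1) => //.
- exact: inS_expn.
- exact: leq_trans lt_iN le_Nn.
- by rewrite ltnW // ltn_expl // prime_gt1 // (allP prP).
Qed.
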